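(* Let $(\mathcal{K},[\cdot,\cdot])$ be a Krein space with fundamental symmetry $J$, let $\{k_n\}_{n\in\mathbb{N}}$ be a frame for the Krein space $\mathcal{K}$, and let $S$ be its frame operator. Then: (i) $\{S^{-1}k_n\}_{n}$ is a dual frame of $\{k_n\}_n$ for the Krein space $\mathcal{K}$; (ii) $\{JS^{-1}k_n\}_n$ is a dual frame of $\{Jk_n\}_n$ for the Krein space $\mathcal{K}$; (iii) $\{JS^{-1}k_n\}_n$ is a dual frame of $\{k_n\}_n$ for the Hilbert space $(\mathcal{K},[\cdot,\cdot]_J)$; (iv) $\{S^{-1}k_n\}_n$ is a dual frame of $\{Jk_n\}_n$ for the Hilbert space $(\mathcal{K},[\cdot,\cdot]_J)$. Moreover, if $0<A\leq B<\infty$ are frame bounds for $\{k_n\}_n$ (as a frame for the Krein space $\mathcal{K}$), then all these dual frames admit the frame bounds $0<B^{-1}\leq A^{-1}<\infty$.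
   Context: A Krein space $(\mathcal{K},[\cdot,\cdot])$ has a fundamental decomposition $\mathcal{K}=\mathcal{K}_+\oplus\mathcal{K}_-$ and fundamental symmetry $J(k^++k^-)=k^+-k^-$, such that $[h,k]_J:=[h,Jk]$ makes $\mathcal{K}$ a Hilbert space; $\|k\|_J:=\sqrt{[k,k]_J}$. A countable sequence $\{k_n\}$ is a frame for the Krein space $\mathcal{K}$ with frame bounds $A\le B$ if $A\|k\|_J^2\leq\sum_n|[k_n,k]|^2\leq B\|k\|_J^2$ for all $k$; a frame for the Hilbert space $(\mathcal{K},[\cdot,\cdot]_J)$ is defined likewise with $[k_n,k]_J$ in place of $[k_n,k]$. The frame operator of a frame $\{k_n\}$ for the Krein space $\mathcal{K}$ is $S=T\tilde JT^*$ where $T:\mathfrak{k}_2(\mathbb{N})\to\mathcal{K}$, $T(\alpha_n)=\sum\alpha_nk_n$, $\mathfrak{k}_2(\mathbb{N})$ is $\ell_2(\mathbb{N})$ with a Krein inner product whose fundamental symmetry $\tilde J$ makes $[\cdot,\cdot]_{\tilde J}$ the standard $\ell_2$ inner product, and $T^*$ is the Krein adjoint; equivalently $Sk=\sum_n[k_n,k]k_n$. $S$ is invertible with bounded inverse. A dual frame of a frame $\{k_n\}$ for the Krein space $\mathcal{K}$ is a frame $\{h_n\}$ for the Krein space $\mathcal{K}$ with $k=\sum_n[h_n,k]k_n$ for all $k\in\mathcal{K}$. A dual frame of a frame $\{f_n\}$ for the Hilbert space $(\mathcal{K},[\cdot,\cdot]_J)$ is a frame $\{g_n\}$ for that Hilbert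 space with $k=\sum_n[g_n,k]_Jf_n=\sum_n[f_n,k]_Jg_n$ for all $k$. *)

From mathcomp Require Import all_boot all_algebra.
From mathcomp Require Import reals complex.
Set Implicit Arguments.
Unset Strict Implicit.
Unset Printing Implicit Defensive.
Import GRing.Theory Num.Theory.
Local Open Scope ring_scope.
Local Open Scope complex_scope.

(* The Krein space is a complex vector space V : lmodType R[i] with an
   (indefinite) inner product ip : V -> V -> R[i], linear in the SECOND
   argument and Hermitian (hence conjugate-linear in the first), so that
   S k = sum_n [k_n, k] k_n is linear in k. *)

Section KreinDefs.
Variable R : realType.
Variable V : lmodType R[i].

Definition hnorm (h : V -> V -> R[i]) (v : V) : R[i] := sqrtC (h v v).

Definition series_sumC (u : nat -> R[i]) (s : R[i]) : Prop :=
  forall eps : R, 0 < eps -> exists N : nat, forall n : nat, (N <= n)%N ->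
    `| \sum_(i < n) u i - s | < eps%:C.

Definition series_sumV (h : V -> V -> R[i]) (u : nat -> V) (y : V) : Prop :=
  forall eps : R, 0 < eps -> exists N : nat, forall n : nat, (N <= n)%N ->
    hnorm h (\sum_(i < n) u i - y) < eps%:C.

Definition hilbert_ip (h : V -> V -> R[i]) : Prop :=
  [/\ (forall (x : V) (a : R[i]) (y z : V), h x (a *: y + z) = a * h x y + h x z),
      (forall x y : V, h x y = (h y x)^*),
      (forall x : V, 0 <= h x x),
      (forall x : V, h x x = 0 -> x = 0) &
      (forall u : nat -> V,
         (forall eps : R, 0 < eps -> exists N : nat, forall m n : nat,
             (N <= m)%N -> (N <= n)%N -> hnorm h (u m - u n) < eps%:C) ->
         exists l : V, forall eps : R, 0 < eps -> exists N : nat,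
             forall n : nat, (N <= n)%N -> hnorm h (u n - l) < eps%:C)].

Definition subspace (P : V -> Prop) : Prop :=
  P 0 /\ forall (a : R[i]) (x y : V), P x -> P y -> P (a *: x + y).

Definition ipJ (ip : V -> V -> R[i]) (J : V -> V) : V -> V -> R[i] :=
  fun h k => ip h (J k).

Definition normJ (ip : V -> V -> R[i]) (J : V -> V) (v : V) : R[i] :=
  hnorm (ipJ ip J) v.

Definition krein_space (ip : V -> V -> R[i]) (J : V -> V) : Prop :=
  [/\ (forall (x : V) (a : R[i]) (y z : V), ip x (a *: y + z) = a * ip x y + ip x z),
      (forall x y : V, ip x y = (ip y x)^*),
      (exists Kp Km : V -> Prop,
         [/\ subspace Kp /\ subspace Km,
             (forall x, Kp x -> Km x -> x = 0) /\
             (forall k : V, exists kp km, Kp kp /\ Km km /\ k = kp + km),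
             (forall x y, Kp x -> Km y -> ip x y = 0),
             (forall x, Kp x -> 0 <= ip x x) /\ (forall x, Km x -> ip x x <= 0) &
             (forall kp km, Kp kp -> Km km -> J (kp + km) = kp - km)]) &
      hilbert_ip (ipJ ip J)].

(* A <= B are frame bounds of the sequence k w.r.t. the form f
   (f = ip: frame for the Krein space; f = ipJ ip J: frame for the
   Hilbert space (V,[.,.]_J)); the norm is always ||.||_J. *)
Definition frame_bounds (ip : V -> V -> R[i]) (J : V -> V)
    (f : V -> V -> R[i]) (k : nat -> V) (A B : R) : Prop :=
  forall x : V, exists s : R[i],
    series_sumC (fun n => `| f (k n) x | ^+ 2) s /\
    A%:C * normJ ip J x ^+ 2 <= s /\ s <= B%:C * normJ ip J x ^+ 2.

Definition is_frame (ip : V -> V -> R[i]) (J : V -> V)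
    (f : V -> V -> R[i]) (k : nat -> V) : Prop :=
  exists A B : R, 0 < A /\ A <= B /\ frame_bounds ip J f k A B.

Definition frame_operator (ip : V -> V -> R[i]) (J : V -> V)
    (k : nat -> V) (S : V -> V) : Prop :=
  forall x : V, series_sumV (ipJ ip J) (fun n => ip (k n) x *: k n) (S x).

Definition krein_dual (ip : V -> V -> R[i]) (J : V -> V) (h k : nat -> V) : Prop :=
  [/\ is_frame ip J ip k, is_frame ip J ip h &
      forall x : V, series_sumV (ipJ ip J) (fun n => ip (h n) x *: k n) x].

Definition hilbert_dual (ip : V -> V -> R[i]) (J : V -> V) (g f : nat -> V) : Prop :=
  [/\ is_frame ip J (ipJ ip J) f, is_frame ip J (ipJ ip J) g,
      (forall x : V, series_sumV (ipJ ip J) (fun n => ipJ ip J (g n) x *: f n) x) &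
      (forall x : V, series_sumV (ipJ ip J) (fun n => ipJ ip J (f n) x *: g n) x)].

End KreinDefs.

From mathcomp Require Import all_boot all_order all_algebra.
From mathcomp Require Import reals complex.
From mathcomp Require Import ring lra.
Import Order.TTheory GRing.Theory Num.Theory.
Set Implicit Arguments.
Unset Strict Implicit.
Local Open Scope ring_scope.
Local Open Scope complex_scope.

(* Write [x, y]_J := [x, J y].  The frame operator S is linear and [.,.]-selfadjoint,
   and the frame inequality reads A [x,x]_J <= [S x, x] <= B [x,x]_J.  Cauchy-Schwarz
   for [.,.]_J and for the positive definite form [S ., .] turns this into
   B^-1 [x,x]_J <= [x, S^-1 x] <= A^-1 [x,x]_J and [S^-1 x, S^-1 x]_J <= A^-2 [x,x]_J;
   as sum_n |[S^-1 k_n, x]|^2 = [S S^-1 x, S^-1 x] = [x, S^-1 x], these are the frame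
   bounds B^-1, A^-1 of {S^-1 k_n}.  Since J is a [.,.]_J-isometry with
   [J u, v] = [u, J v], the bounds transfer to the three other sequences, and the
   reconstruction formulas follow by applying the bounded linear maps id, J, S^-1 and
   J S^-1 to the convergent series S z = sum_n [k_n, z] k_n. *)

Section ComplexSeries.
Variable R : realType.
Implicit Types (u v : nat -> R[i]) (a s t : R[i]).

Lemma normr_Re (x : R[i]) : `|x| = (complex.Re `|x|)%:C.
Proof. by rewrite RRe_real // normr_real. Qed.

Lemma ger0_realC (x : R[i]) : 0 <= x -> exists2 r : R, 0 <= r & x = r%:C.
Proof.
move=> x_ge0; have xE : x = (complex.Re x)%:C by rewrite RRe_real // ger0_real.
by exists (complex.Re x); rewrite // -lecR -xE.
Qed.

Lemma eq_series_sumC u v s : u =1 v -> series_sumC u s -> series_sumC v s.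
Proof.
move=> euv us eps eps_gt0; have [N HN] := us eps eps_gt0; exists N => n Nn.
by under eq_bigr do rewrite -euv; apply: HN.
Qed.

Lemma series_sumC_unique u s t : series_sumC u s -> series_sumC u t -> s = t.
Proof.
move=> us ut; apply/eqP; apply/negPn/negP => neq_st.
set r := complex.Re `|s - t|.
have r_gt0 : 0 < r by rewrite -ltcR -normr_Re normr_gt0 subr_eq0.
have [N1 h1] := us (r / 2) ltac:(lra).
have [N2 h2] := ut (r / 2) ltac:(lra).
have := h1 _ (leq_maxl N1 N2); have := h2 _ (leq_maxr N1 N2).
move: (\sum_(i < maxn N1 N2) u i) => U ltUt ltUs.
have : `|s - t| < (r / 2)%:C + (r / 2)%:C.
  apply: le_lt_trans (ltrD ltUt ltUs).
  have -> : s - t = (U - t) - (U - s) by ring.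
  exact: ler_normB.
rewrite {1}normr_Re -/r -rmorphD ltcR; lra.
Qed.

Lemma series_sumC_add u v s t : series_sumC u s -> series_sumC v t ->
  series_sumC (fun n => u n + v n) (s + t).
Proof.
move=> us vt eps eps_gt0.
have [N1 h1] := us (eps / 2) ltac:(lra).
have [N2 h2] := vt (eps / 2) ltac:(lra).
exists (maxn N1 N2) => n; rewrite geq_max => /andP[N1n N2n].
rewrite big_split /=.
have -> : \sum_(i < n) u i + \sum_(i < n) v i - (s + t) =
   (\sum_(i < n) u i - s) + (\sum_(i < n) v i - t) by ring.
apply: le_lt_trans (ler_normD _ _) _.
have -> : eps = eps / 2 + eps / 2 by field.
by rewrite rmorphD ltrD ?h1 ?h2.
Qed.

Lemma series_sumC_scale a u s : series_sumC u s ->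
  series_sumC (fun n => a * u n) (a * s).
Proof.
move=> us eps eps_gt0.
set ra := complex.Re `|a|.
have ra_ge0 : 0 <= ra by rewrite -ler0c -normr_Re.
have [N h] := us (eps / (ra + 1)) ltac:(apply: divr_gt0; lra).
exists N => n Nn.
rewrite -mulr_sumr -mulrBr normrM.
apply: (@le_lt_trans _ _ (`|a| * (eps / (ra + 1))%:C)).
  by apply: ler_wpM2l => //; apply: ltW; apply: h.
rewrite normr_Re -rmorphM ltcR -/ra mulrA ltr_pdivrMr; nra.
Qed.

Lemma series_sumC_conj u s : series_sumC u s -> series_sumC (fun n => (u n)^*) s^*.
Proof.
move=> us eps eps_gt0; have [N h] := us eps eps_gt0; exists N => n Nn.
rewrite -(rmorph_sum (@conjc R)) -rmorphB /= -[conjc _]/(Num.conj _) norm_conjC.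
exact: h.
Qed.

End ComplexSeries.

Section SesquilinearForm.
Variables (R : realType) (V : lmodType R[i]) (P : V -> V -> R[i]).
Hypothesis Plin : forall (x : V) (a : R[i]) (y z : V), P x (a *: y + z) = a * P x y + P x z.
Hypothesis Pherm : forall x y : V, P x y = (P y x)^*.

Lemma sesq0r x : P x 0 = 0.
Proof.
have := Plin x 1 0 0; rewrite scaler0 addr0 mul1r => e.
by apply: (addrI (P x 0)); rewrite -e addr0.
Qed.

Lemma sesqDr x y z : P x (y + z) = P x y + P x z.
Proof. by rewrite -[y]scale1r Plin mul1r scale1r. Qed.

Lemma sesqZr x a y : P x (a *: y) = a * P x y.
Proof. by rewrite -[a *: y]addr0 Plin sesq0r addr0. Qed.

Lemma sesqNr x y : P x (- y) = - P x y.
Proof. by rewrite -scaleN1r sesqZr mulN1r. Qed.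

Lemma sesqBr x y z : P x (y - z) = P x y - P x z.
Proof. by rewrite sesqDr sesqNr. Qed.

Lemma sesq_sumr x n (u : nat -> V) : P x (\sum_(i < n) u i) = \sum_(i < n) P x (u i).
Proof.
elim: n => [|n IH]; first by rewrite !big_ord0 sesq0r.
by rewrite !big_ord_recr /= sesqDr IH.
Qed.

Lemma sesq0l x : P 0 x = 0.
Proof. by rewrite Pherm sesq0r rmorph0. Qed.

Lemma sesqDl x y z : P (y + z) x = P y x + P z x.
Proof. by rewrite [LHS]Pherm sesqDr rmorphD /= -!Pherm. Qed.

Lemma sesqZl x a y : P (a *: y) x = a^* * P y x.
Proof. by rewrite [LHS]Pherm sesqZr rmorphM /= -Pherm. Qed.

Lemma sesqNl x y : P (- y) x = - P y x.
Proof. by rewrite [LHS]Pherm sesqNr rmorphN /= -Pherm. Qed.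

Hypothesis Pge0 : forall x, 0 <= P x x.
Hypothesis Pdef : forall x, P x x = 0 -> x = 0.

Lemma sesq_CauchySchwarz y z : `|P y z| ^+ 2 <= P y y * P z z.
Proof.
have [->|z_neq0] := eqVneq z 0.
  by rewrite sesq0r sesq0l normr0 expr0n mulr0.
have c_gt0 : 0 < P z z by rewrite lt_def Pge0 andbT; apply: contra_neq z_neq0; apply: Pdef.
set c := P z z in c_gt0 *.
have c_neq0 : c != 0 by rewrite gt_eqF.
have Pherm' : forall x y, P x y = Num.conj (P y x) := Pherm.
have c_real : Num.conj c = c by apply/conj_Creal/ger0_real/ltW.
(* positivity of P (t z + y) (t z + y) at the minimizing t = - P z y / P z z *)
have := Pge0 ((- P z y / c) *: z + y).
rewrite sesqDl !sesqZl !sesqDr !sesqZr -/c fmorph_div rmorphN /= c_real.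
rewrite -Pherm' (Pherm' z y) normCK; move: (P y z) => b.
have -> : - b / c * (- Num.conj b / c * c + Num.conj b) + (- Num.conj b / c * b + P y y) =
          P y y - (b * Num.conj b) / c by field.
by rewrite subr_ge0 ler_pdivrMr // mulrC.
Qed.

End SesquilinearForm.

Section HilbertSeries.
Variables (R : realType) (V : lmodType R[i]) (h : V -> V -> R[i]).
Hypothesis hH : hilbert_ip h.

Lemma hilbert_linear x a y z : h x (a *: y + z) = a * h x y + h x z.
Proof. by case: hH => + _ _ _ _; apply. Qed.

Lemma hilbert_hermitian x y : h x y = (h y x)^*.
Proof. by case: hH => _ + _ _ _; apply. Qed.

Lemma hilbert_ge0 x : 0 <= h x x.
Proof. by case: hH => _ _ + _ _; apply. Qed.

Lemma hilbert_definite x : h x x = 0 -> x = 0.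
Proof. by case: hH => _ _ _ + _; apply. Qed.

Local Notation hlin := hilbert_linear.
Local Notation hherm := hilbert_hermitian.

Lemma hilbert_ext a b : (forall w, h w a = h w b) -> a = b.
Proof.
move=> eab; apply/eqP; rewrite -subr_eq0; apply/eqP; apply: hilbert_definite.
by rewrite (sesqBr hlin) eab subrr.
Qed.

Lemma hnorm_ltE v e : 0 < e -> (hnorm h v < e%:C) = (h v v < (e ^+ 2)%:C).
Proof.
move=> e_gt0; rewrite /hnorm -(ltr_pXn2r (n := 2)) //.
- by rewrite sqrtCK rmorphXn.
- by rewrite nnegrE sqrtC_ge0 hilbert_ge0.
- by rewrite nnegrE ler0c ltW.
Qed.

Lemma eq_series_sumV (u v : nat -> V) y : u =1 v ->
  series_sumV h u y -> series_sumV h v y.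
Proof.
move=> euv uy eps eps_gt0; have [N HN] := uy eps eps_gt0; exists N => n Nn.
by under eq_bigr do rewrite -euv; apply: HN.
Qed.

Lemma series_sumV_form w (u : nat -> V) y : series_sumV h u y ->
  series_sumC (fun n => h w (u n)) (h w y).
Proof.
move=> uy eps eps_gt0.
have [c c_ge0 wwE] := ger0_realC (hilbert_ge0 w).
set e := eps ^+ 2 / (c + 1).
have e_gt0 : 0 < e by apply: divr_gt0; [apply: exprn_gt0 | lra].
have [N HN] := uy (Num.sqrt e) ltac:(by rewrite sqrtr_gt0).
exists N => n Nn.
have := HN n Nn; rewrite hnorm_ltE ?sqrtr_gt0 // sqr_sqrtr ?ltW //.
rewrite -(sesq_sumr hlin) -(sesqBr hlin); move: (_ - y) => d dd_lt.
rewrite -(ltr_pXn2r (n := 2)) ?nnegrE ?normr_ge0 ?ler0c ?(ltW eps_gt0) //.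
rewrite hherm -[conjc _]/(Num.conj _) norm_conjC.
apply: le_lt_trans (sesq_CauchySchwarz hlin hherm hilbert_ge0 hilbert_definite d w) _.
rewrite wwE.
apply: le_lt_trans (_ : e%:C * c%:C < _).
  by apply: ler_wpM2r; [rewrite ler0c | apply: ltW].
rewrite -rmorphM -rmorphXn ltcR /e mulrAC ltr_pdivrMr; last lra.
have : 0 < eps ^+ 2 by apply: exprn_gt0.
nra.
Qed.

Section BoundedLinearMap.
Variable L : V -> V.
Hypothesis Llin : forall a y z, L (a *: y + z) = a *: L y + L z.

Lemma lin0 : L 0 = 0.
Proof.
have := Llin 1 0 0; rewrite scaler0 addr0 scale1r => e.
by apply: (addrI (L 0)); rewrite -e addr0.
Qed.

Lemma linD y z : L (y + z) = L y + L z.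
Proof. by have := Llin 1 y z; rewrite !scale1r. Qed.

Lemma linB y z : L (y - z) = L y - L z.
Proof. by have := Llin (-1) z 0; rewrite addr0 lin0 addr0 !scaleN1r linD => <-. Qed.

Lemma lin_sum n (u : nat -> V) : L (\sum_(i < n) u i) = \sum_(i < n) L (u i).
Proof.
elim: n => [|n IH]; first by rewrite !big_ord0 lin0.
by rewrite !big_ord_recr /= linD IH.
Qed.

Lemma series_sumV_bounded (c : R) (u : nat -> V) y : 0 < c ->
  (forall d, h (L d) (L d) <= (c ^+ 2)%:C * h d d) ->
  series_sumV h u y -> series_sumV h (fun n => L (u n)) (L y).
Proof.
move=> c_gt0 Lbound uy eps eps_gt0.
have [N HN] := uy (eps / c) ltac:(exact: divr_gt0).
exists N => n Nn.
have := HN n Nn; rewrite !hnorm_ltE ?divr_gt0 // -lin_sum -linB.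
move: (_ - y) => d dd_lt.
apply: le_lt_trans (Lbound d) _.
apply: lt_le_trans (_ : (c ^+ 2)%:C * ((eps / c) ^+ 2)%:C <= _).
  by rewrite ltr_pM2l // ltcR exprn_gt0.
rewrite -rmorphM lecR expr_div_n mulrCA mulfV ?mulr1 //.
by rewrite expf_neq0 // gt_eqF.
Qed.

End BoundedLinearMap.
End HilbertSeries.

Section FundamentalSymmetry.
Variables (R : realType) (V : lmodType R[i]) (ip : V -> V -> R[i]) (J : V -> V).
Hypothesis KJ : krein_space ip J.

Lemma fundamental_symmetryK x : J (J x) = x.
Proof.
case: KJ => _ _ [Kp [Km [[_ [Km0 KmZD]] [_ dec] _ _ JK]]] _.
have [kp [km [Kp_kp [Km_km ->]]]] := dec x.
have Km_Nkm : Km (- km) by have := KmZD (-1) km 0 Km_km Km0; rewrite scaleN1r addr0.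
by rewrite JK // (JK _ _ Kp_kp Km_Nkm) opprK.
Qed.

Lemma fundamental_symmetry_selfadjoint x y : ip (J x) y = ip x (J y).
Proof.
case: KJ => ipl iph [Kp [Km [[_ _] [_ dec] orth _ JK]]] _.
have [kp [km [Kp_kp [Km_km ->]]]] := dec x.
have [lp [lm [Kp_lp [Km_lm ->]]]] := dec y.
rewrite !JK //.
have o1 : ip kp lm = 0 by apply: orth.
have o2 : ip km lp = 0 by rewrite iph orth // conjc0.
rewrite !(sesqDl ipl iph) !(sesqBr ipl) !(sesqDr ipl) !(sesqNl ipl iph) o1 o2.
ring.
Qed.

End FundamentalSymmetry.

(* Used with c = [x,x]_J, s = [x, S^-1 x], y = [S^-1 x, S^-1 x]_J, p = [S J x, J x]. *)
Lemma inverse_bounds (R : realFieldType) (A B c s y p : R) :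
  0 < A -> A <= B -> 0 <= c -> 0 <= s ->
  A * y <= s -> s ^+ 2 <= y * c -> c ^+ 2 <= p * s -> p <= B * c ->
  [/\ B^-1 * c <= s, s <= A^-1 * c & y <= A^-1 ^+ 2 * c].
Proof.
move=> A_gt0 le_AB c_ge0 s_ge0 Ays scy cps pBc.
have B_gt0 : 0 < B by lra.
have sA : A * s <= c.
  have [->|s_neq0] := eqVneq s 0; first nra.
  have : s * (A * s) <= s * c by nra.
  by rewrite ler_pM2l // lt_def s_neq0.
have cB : c <= B * s.
  have [->|c_neq0] := eqVneq c 0; first nra.
  have : c * c <= c * (B * s) by nra.
  by rewrite ler_pM2l // lt_def c_neq0.
split.
- by rewrite ler_pdivrMl.
- by rewrite ler_pdivlMl.
- by rewrite expr2 -mulrA ler_pdivlMl // ler_pdivlMl //; nra.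
Qed.

Section KreinFrame.
Variables (R : realType) (V : lmodType R[i]) (ip : V -> V -> R[i]) (J : V -> V).
Hypothesis iplin : forall x a y z, ip x (a *: y + z) = a * ip x y + ip x z.
Hypothesis ipherm : forall x y, ip x y = (ip y x)^*.
Hypothesis JK : forall x, J (J x) = x.
Hypothesis Jsa : forall x y, ip (J x) y = ip x (J y).
Hypothesis hH : hilbert_ip (ipJ ip J).

Local Notation h := (ipJ ip J).
Local Notation hlin := (hilbert_linear hH).
Local Notation hherm := (hilbert_hermitian hH).
Local Notation hge0 := (hilbert_ge0 hH).

Lemma ipJ_Jl x y : h (J x) y = ip x y.
Proof. by rewrite /ipJ Jsa JK. Qed.

Lemma ipJ_Jr x y : h x (J y) = ip x y.
Proof. by rewrite /ipJ JK. Qed.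

Lemma ipJ_J x y : h (J x) (J y) = h x y.
Proof. by rewrite ipJ_Jl /ipJ. Qed.

Lemma fundamental_symmetry_linear a y z : J (a *: y + z) = a *: J y + J z.
Proof. by apply: (hilbert_ext hH) => w; rewrite ipJ_Jr iplin hlin !ipJ_Jr. Qed.

Lemma normJ_sqr x : normJ ip J x ^+ 2 = h x x.
Proof. by rewrite /normJ /hnorm sqrtCK. Qed.

Lemma frame_bounds_isometry (f f' : V -> V -> R[i]) (g g' : nat -> V) (phi : V -> V) A B :
  (forall x, h (phi x) (phi x) = h x x) -> (forall n x, f' (g' n) x = f (g n) (phi x)) ->
  frame_bounds ip J f g A B -> frame_bounds ip J f' g' A B.
Proof.
move=> phi_iso ff' fb x; have [s [gs bs]] := fb (phi x).
exists s; split; first by apply: eq_series_sumC gs => n; rewrite ff'.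
by rewrite normJ_sqr -phi_iso -normJ_sqr.
Qed.

Lemma frame_bounds_J (g : nat -> V) A B : frame_bounds ip J ip g A B ->
  [/\ frame_bounds ip J ip (J \o g) A B,
      frame_bounds ip J h g A B &
      frame_bounds ip J h (J \o g) A B].
Proof.
have J_iso x : h (J x) (J x) = h x x by exact: ipJ_J.
move=> gb; split.
- by apply: (frame_bounds_isometry J_iso _ gb) => n x /=; rewrite Jsa.
- exact: (frame_bounds_isometry J_iso _ gb).
- by apply: (frame_bounds_isometry (phi := id) _ _ gb) => // n x /=; rewrite ipJ_Jl.
Qed.

Variables (k : nat -> V) (S Q : V -> V).
Hypothesis FO : frame_operator ip J k S.
Hypothesis SK : cancel S Q.
Hypothesis QK : cancel Q S.

Lemma frame_operator_ipJ w x :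
  series_sumC (fun n => ip (k n) x * h w (k n)) (h w (S x)).
Proof. by apply: eq_series_sumC (series_sumV_form hH w (FO x)) => n; rewrite (sesqZr hlin). Qed.

Lemma frame_operator_ip w x :
  series_sumC (fun n => ip (k n) x * ip w (k n)) (ip w (S x)).
Proof. by rewrite -ipJ_Jl; apply: eq_series_sumC (frame_operator_ipJ _ x) => n; rewrite ipJ_Jl. Qed.

Lemma frame_operator_selfadjoint u v : ip (S u) v = ip u (S v).
Proof.
rewrite ipherm; apply: series_sumC_unique (series_sumC_conj (frame_operator_ip v u)) _.
apply: eq_series_sumC (frame_operator_ip u v) => n.
by rewrite rmorphM /= -!ipherm mulrC.
Qed.

Lemma frame_operator_linear a u v : S (a *: u + v) = a *: S u + S v.
Proof.
apply: (hilbert_ext hH) => w.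
apply: series_sumC_unique (frame_operator_ipJ w (a *: u + v)) _.
rewrite hlin; apply: eq_series_sumC (series_sumC_add
  (series_sumC_scale a (frame_operator_ipJ w u)) (frame_operator_ipJ w v)) => n.
by rewrite iplin mulrDl mulrA.
Qed.

Lemma frame_operator_quadratic y s :
  series_sumC (fun n => `|ip (k n) y| ^+ 2) s -> s = ip (S y) y.
Proof.
move=> ys; rewrite frame_operator_selfadjoint; apply: series_sumC_unique ys _.
apply: eq_series_sumC (frame_operator_ip y y) => n.
by rewrite normCK [Num.conj _](_ : _ = ip y (k n)) // ipherm.
Qed.

Lemma frame_inverse_linear a u v : Q (a *: u + v) = a *: Q u + Q v.
Proof. by rewrite -{1}[u]QK -{1}[v]QK -frame_operator_linear SK. Qed.

Lemma frame_inverse_selfadjoint u v : ip (Q u) v = ip u (Q v).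
Proof. by rewrite -{1}[v]QK -frame_operator_selfadjoint QK. Qed.

Lemma frame_expansion (L : V -> V) (c : R) (coef : nat -> R[i]) z x :
  (forall a y w, L (a *: y + w) = a *: L y + L w) -> 0 < c ->
  (forall d, h (L d) (L d) <= (c ^+ 2)%:C * h d d) ->
  (forall n, ip (k n) z = coef n) -> L (S z) = x ->
  series_sumV h (fun n => coef n *: L (k n)) x.
Proof.
move=> Llin c_gt0 Lbound coefE <-.
apply: eq_series_sumV (series_sumV_bounded hH Llin c_gt0 Lbound (FO z)) => n.
by rewrite -[_ *: k n]addr0 Llin (lin0 Llin) addr0 coefE.
Qed.

(* In expansion_a_b the coefficients are the products against a_n, the vectors are b_n. *)
Lemma expansion_Qk_k x : series_sumV h (fun n => ip (Q (k n)) x *: k n) x.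
Proof.
apply: (@frame_expansion id 1 _ (Q x)) => //= [d|n]; first by rewrite expr1n mul1r.
by rewrite frame_inverse_selfadjoint.
Qed.

Lemma expansion_Qk_Jk x : series_sumV h (fun n => ip (Q (k n)) (J x) *: J (k n)) x.
Proof.
apply: (@frame_expansion J 1 _ (Q (J x))) => [||d|n|].
- exact: fundamental_symmetry_linear.
- exact: ltr01.
- by rewrite ipJ_J expr1n mul1r.
- by rewrite frame_inverse_selfadjoint.
- by rewrite QK JK.
Qed.

Section FrameBounds.
Variables A B : R.
Hypothesis A_gt0 : 0 < A.
Hypothesis le_AB : A <= B.
Hypothesis FB : frame_bounds ip J ip k A B.

Lemma frame_operator_bounds x :
  A%:C * h x x <= ip (S x) x /\ ip (S x) x <= B%:C * h x x.
Proof. by have [s [ks]] := FB x; rewrite -(frame_operator_quadratic ks) normJ_sqr. Qed.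

Lemma frame_operator_ge0 x : 0 <= ip (S x) x.
Proof.
apply: le_trans (proj1 (frame_operator_bounds x)).
by rewrite mulr_ge0 ?hge0 // ler0c ltW.
Qed.

Lemma frame_operator_definite x : ip (S x) x = 0 -> x = 0.
Proof.
move=> Sxx0; apply: (hilbert_definite hH); apply/eqP.
have [+ _] := frame_operator_bounds x; rewrite Sxx0.
rewrite pmulr_rle0 ?ltcR // => hxx_le0.
by rewrite eq_le hxx_le0 hge0.
Qed.

Let P u v := ip (S u) v.
Let Plin u a y z : P u (a *: y + z) = a * P u y + P u z.
Proof. exact: iplin. Qed.
Let Pherm u v : P u v = (P v u)^*.
Proof. by rewrite /P ipherm frame_operator_selfadjoint. Qed.

Lemma frame_inverse_bounds x :
  [/\ B^-1%:C * h x x <= ip x (Q x), ip x (Q x) <= A^-1%:C * h x x &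
      h (Q x) (Q x) <= (A^-1 ^+ 2)%:C * h x x].
Proof.
set y := Q x; have Sy : S y = x := QK x.
have [c c_ge0 cE] := ger0_realC (hge0 x).
have [s s_ge0 sE] : exists2 s : R, 0 <= s & ip x y = s%:C.
  by apply: ger0_realC; rewrite -{1}Sy frame_operator_ge0.
have [r _ rE] := ger0_realC (hge0 y).
have [p _ pE] := ger0_realC (frame_operator_ge0 (J x)).
have Ars : A * r <= s.
  by have [+ _] := frame_operator_bounds y; rewrite Sy rE sE -rmorphM lecR.
have src : s ^+ 2 <= r * c.
  have := sesq_CauchySchwarz hlin hherm hge0 (hilbert_definite hH) (J y) x.
  rewrite ipJ_Jl ipJ_J ipherm -[conjc _]/(Num.conj _) norm_conjC sE rE cE.
  by rewrite ger0_norm ?ler0c // -rmorphXn -rmorphM lecR.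
(* Cauchy-Schwarz for the positive form [S., .], with [S (J x), y] = [J x, x] = [x, x]_J *)
have cps : c ^+ 2 <= p * s.
  have := sesq_CauchySchwarz Plin Pherm frame_operator_ge0 frame_operator_definite (J x) y.
  rewrite /P pE Sy sE frame_operator_selfadjoint Sy -ipJ_Jl JK cE.
  by rewrite ger0_norm ?ler0c // -rmorphXn -rmorphM lecR.
have pBc : p <= B * c.
  by have [_] := frame_operator_bounds (J x); rewrite pE ipJ_J cE -rmorphM lecR.
have [lb ub yb] := inverse_bounds A_gt0 le_AB c_ge0 s_ge0 Ars src cps pBc.
by split; rewrite ?sE ?rE cE -?rmorphM ?rmorphXn -?rmorphM lecR.
Qed.

Lemma frame_inverse_norm d : h (Q d) (Q d) <= (A^-1 ^+ 2)%:C * h d d.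
Proof. by have [] := frame_inverse_bounds d. Qed.

Lemma frame_bounds_inverse : frame_bounds ip J ip (Q \o k) B^-1 A^-1.
Proof.
move=> x; have [s [ks _]] := FB (Q x).
have sE : s = ip x (Q x) by rewrite (frame_operator_quadratic ks) QK.
exists s; split; first by apply: eq_series_sumC ks => n /=; rewrite frame_inverse_selfadjoint.
by rewrite normJ_sqr sE; have [] := frame_inverse_bounds x.
Qed.

Lemma expansion_k_JQk x : series_sumV h (fun n => h (k n) x *: J (Q (k n))) x.
Proof.
apply: (@frame_expansion (J \o Q) A^-1 _ (J x)) => /= [a y w|||//|].
- by rewrite frame_inverse_linear fundamental_symmetry_linear.
- by rewrite invr_gt0.
- by move=> d; rewrite ipJ_J frame_inverse_norm.
- by rewrite SK JK.
Qed.

Lemma expansion_Jk_Qk x : series_sumV h (fun n => h (J (k n)) x *: Q (k n)) x.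
Proof.
apply: (@frame_expansion Q A^-1 _ x) => [|||n|//].
- exact: frame_inverse_linear.
- by rewrite invr_gt0.
- exact: frame_inverse_norm.
- by rewrite ipJ_Jl.
Qed.

End FrameBounds.
Lemma dual_frame_bounds A B : 0 < A -> A <= B -> frame_bounds ip J ip k A B ->
  [/\ frame_bounds ip J ip (Q \o k) B^-1 A^-1,
      frame_bounds ip J ip (J \o Q \o k) B^-1 A^-1,
      frame_bounds ip J h (J \o Q \o k) B^-1 A^-1 &
      frame_bounds ip J h (Q \o k) B^-1 A^-1].
Proof.
move=> A_gt0 le_AB FB; have FQ := frame_bounds_inverse A_gt0 le_AB FB.
by have [] := frame_bounds_J FQ.
Qed.

Lemma krein_frame_duals : is_frame ip J ip k ->
  [/\ krein_dual ip J (Q \o k) k,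
      krein_dual ip J (J \o Q \o k) (J \o k),
      hilbert_dual ip J (J \o Q \o k) k,
      hilbert_dual ip J (Q \o k) (J \o k) &
      forall A B : R, 0 < A -> A <= B -> frame_bounds ip J ip k A B ->
        [/\ frame_bounds ip J ip (Q \o k) B^-1 A^-1,
            frame_bounds ip J ip (J \o Q \o k) B^-1 A^-1,
            frame_bounds ip J h (J \o Q \o k) B^-1 A^-1 &
            frame_bounds ip J h (Q \o k) B^-1 A^-1]].
Proof.
move=> kF; have [A [B [A_gt0 [le_AB FB]]]] := kF.
have B_gt0 : 0 < B := lt_le_trans A_gt0 le_AB.
have Bi_gt0 : 0 < B^-1 by rewrite invr_gt0.
have le_BiAi : B^-1 <= A^-1 by rewrite lef_pV2 ?posrE.
have [DQ DJQ DJQh DQh] := dual_frame_bounds A_gt0 le_AB FB.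
have [Jk kh Jkh] := frame_bounds_J FB.
have frame f g C D : 0 < C -> C <= D -> frame_bounds ip J f g C D -> is_frame ip J f g.
  by move=> *; exists C, D.
split; last exact: dual_frame_bounds.
- by split; [|exact: frame DQ|exact: expansion_Qk_k].
- split; [exact: frame Jk|exact: frame DJQ|] => x.
  by apply: eq_series_sumV (expansion_Qk_Jk x) => n /=; rewrite Jsa.
- split; [exact: frame kh|exact: frame DJQh| |exact: expansion_k_JQk A_gt0 le_AB FB] => x.
  by apply: eq_series_sumV (expansion_Qk_k x) => n /=; rewrite ipJ_Jl.
- split; [exact: frame Jkh|exact: frame DQh|exact: expansion_Qk_Jk|].
  exact: expansion_Jk_Qk A_gt0 le_AB FB.
Qed.

End KreinFrame.

Unset Implicit Arguments.

Theorem proposition3p8 (R : realType) (V : lmodType R[i])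
    (ip : V -> V -> R[i]) (J : V -> V) (k : nat -> V) (S Sinv : V -> V) :
  krein_space ip J ->
  is_frame ip J ip k ->
  frame_operator ip J k S ->
  cancel S Sinv -> cancel Sinv S ->
  [/\ krein_dual ip J (Sinv \o k) k,
      krein_dual ip J (J \o Sinv \o k) (J \o k),
      hilbert_dual ip J (J \o Sinv \o k) k,
      hilbert_dual ip J (Sinv \o k) (J \o k) &
      forall A B : R, 0 < A -> A <= B -> frame_bounds ip J ip k A B ->
        [/\ frame_bounds ip J ip (Sinv \o k) B^-1 A^-1,
            frame_bounds ip J ip (J \o Sinv \o k) B^-1 A^-1,
            frame_bounds ip J (ipJ ip J) (J \o Sinv \o k) B^-1 A^-1 &
            frame_bounds ip J (ipJ ip J) (Sinv \o k) B^-1 A^-1]].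
Proof.
move=> KJ kF FO SK QK; have [iplin ipherm _ hH] := KJ.
have JK := fundamental_symmetryK KJ.
have Jsa := fundamental_symmetry_selfadjoint KJ.
exact: (krein_frame_duals iplin ipherm JK Jsa hH FO SK QK kF).
Qed.
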